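(* Let $\Gamma$ be a finite connected $(G,2)$-geodesic-transitive graph of girth at least $4$, with $G\le\mathrm{Aut}(\Gamma)$. Let $N$ be an intransitive normal subgroup of $G$ with at least $3$ orbits on $V(\Gamma)$. Then $\Gamma_N$ is a complete graph if and only if $\Gamma_N$ has girth $3$.
   Context: A $2$-geodesic is a path $(v_0,v_1,v_2)$ with $d(v_0,v_2)=2$; $\Gamma$ is $(G,2)$-geodesic-transitive if it has a $2$-geodesic and $G$ is transitive on vertices, on arcs and on $2$-geodesics. $\Gamma_N$ is the graph whose vertices are the $N$-orbits on $V(\Gamma)$, two distinct orbits being adjacent iff some edge of $\Gamma$ joins them. *)

From mathcomp Require Import all_boot all_fingroup.
Set Implicit Arguments. Unset Strict Implicit. Unset Printing Implicit Defensive.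
Local Open Scope group_scope.

Section Graphs.
Variable T : finType.

(* A simple graph on the vertex set A : {set T} with adjacency e
   (e is assumed symmetric and irreflexive where relevant). *)

Definition has_cycle_len (A : {set T}) (e : rel T) (k : nat) : Prop :=
  exists s : seq T, [/\ uniq s, size s = k, 3 <= k, all (mem A) s & path.cycle e s].

(* girth (length of a shortest cycle) is at least m; vacuous for acyclic graphs *)
Definition girth_ge (A : {set T}) (e : rel T) (m : nat) : Prop :=
  forall k, has_cycle_len A e k -> m <= k.

Definition girth_eq (A : {set T}) (e : rel T) (m : nat) : Prop :=
  has_cycle_len A e m /\ girth_ge A e m.

Definition complete_graph (A : {set T}) (e : rel T) : Prop :=
  forall x y, x \in A -> y \in A -> x != y -> e x y.

Definition two_geodesic (e : rel T) (v0 v1 v2 : T) : bool :=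
  [&& e v0 v1, e v1 v2, v0 != v2 & ~~ e v0 v2].

Definition is_aut_group (e : rel T) (G : {group {perm T}}) : Prop :=
  forall g, g \in G -> forall x y, e (g x) (g y) = e x y.

Definition G2_geodesic_transitive (e : rel T) (G : {group {perm T}}) : Prop :=
  [/\ (exists v0 v1 v2, two_geodesic e v0 v1 v2),
      (forall x y, exists2 g, g \in G & g x = y),
      (forall x y x' y', e x y -> e x' y' ->
          exists2 g, g \in G & (g x = x' /\ g y = y')) &
      (forall u0 u1 u2 w0 w1 w2, two_geodesic e u0 u1 u2 -> two_geodesic e w0 w1 w2 ->
          exists2 g, g \in G & [/\ g u0 = w0, g u1 = w1 & g u2 = w2])].

Definition orbits_of (N : {group {perm T}}) : {set {set T}} :=
  [set orbit 'P N x | x : T].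

Definition quot_adj (e : rel T) : rel {set T} :=
  fun B C => (B != C) && [exists x in B, exists y in C, e x y].

End Graphs.

From mathcomp Require Import all_boot all_fingroup.
Set Implicit Arguments. Unset Strict Implicit. Unset Printing Implicit Defensive.
Local Open Scope group_scope.

(* Only one direction has content: a triangle of Gamma_N forces Gamma_N to be
   complete.  Since N acts by automorphisms, every vertex of an N-orbit B has
   a neighbour in each orbit adjacent to B.  A triangle B1 B2 B3 of Gamma_N
   therefore yields a vertex x of B1 with neighbours y in B2 and z in B3;
   girth >= 4 makes (y, x, z) a 2-geodesic whose end orbits are adjacent.
   As G normalises N it permutes the N-orbits, so transitivity on
   2-geodesics makes the end orbits of every 2-geodesic adjacent.  Hence two
   distinct orbits adjacent to a common orbit are adjacent, i.e. "equal or
   adjacent" is transitive on orbits; it contains the edges of the connected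
   graph Gamma, so any two distinct orbits are adjacent. *)

Section Relations.
Variable T : finType.
Implicit Types (e r s : rel T) (A : {set T}).

Lemma connect_subrel e s :
  reflexive s -> transitive s -> subrel e s -> subrel (connect e) s.
Proof.
move=> sR sT es x _ /connectP[p + ->]; elim: p x => [|y p IHp] x /=.
  by rewrite sR.
by case/andP=> /es sxy /IHp; apply: sT.
Qed.

Lemma complete_girth_eq3 A r :
  2 < #|A| -> complete_graph A r -> girth_eq A r 3.
Proof.
move=> /card_gt2P[x [y [z [[xA yA zA] [xy yz zx]]]]] rA.
split; last by move=> k [s []].
exists [:: x; y; z]; split=> //=; first by rewrite !inE negb_or xy eq_sym zx yz.
  by rewrite xA yA zA.
by rewrite !rA.
Qed.

Lemma has_cycle_len3_triangle A r :
  has_cycle_len A r 3 ->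
  exists x y z, [/\ [/\ x \in A, y \in A & z \in A], r x y, r y z & r z x].
Proof.
case=> s [_ s3 _ sA rs]; case: s s3 sA rs => [|x [|y [|z []]]] //= _.
by rewrite !andbT => /and3P[xA yA zA] /and3P[rxy ryz rzx]; exists x, y, z.
Qed.

Lemma girth_ge4_no_triangle e x y z :
  irreflexive e -> girth_ge [set: T] e 4 -> e x y -> e y z -> ~~ e z x.
Proof.
move=> eI girth4 exy eyz; apply/negP=> ezx.
have neq u v : e u v -> u != v by apply: contraTneq => ->; rewrite eI.
suff /girth4 : has_cycle_len [set: T] e 3 by [].
exists [:: x; y; z]; split=> //=; last by rewrite exy eyz ezx.
  by rewrite !inE negb_or (neq x y) // (neq y z) // (eq_sym x z) neq.
by rewrite !inE.
Qed.

Lemma quot_adjP e (B C : {set T}) :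
  reflect (B != C /\ exists x y, [/\ x \in B, y \in C & e x y])
          (quot_adj e B C).
Proof.
apply: (iffP andP) => -[BC]; last first.
  by case=> x [y [xB yC exy]]; split=> //; apply/existsP; exists x;
     rewrite xB; apply/existsP; exists y; rewrite yC.
by case/existsP=> x /andP[xB /existsP[y /andP[yC exy]]]; split=> //; exists x, y.
Qed.

Lemma quot_adj_sym e : symmetric e -> symmetric (quot_adj e).
Proof.
move=> eS B C; apply/quot_adjP/quot_adjP=> -[BC [x [y [xB yC exy]]]];
  by split; [rewrite eq_sym | exists y, x; rewrite eS; split].
Qed.

End Relations.

Section Orbits.
Variables (T : finType) (e : rel T) (N : {group {perm T}}).
Hypothesis autN : is_aut_group e N.

Local Notation O x := (orbit 'P N x).

Lemma orbit_perm_norm g x u : g \in 'N(N) -> (g u \in O (g x)) = (u \in O x).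
Proof. by move=> /normP nNg; rewrite -{1}nNg -!apermE orbit_conjsg. Qed.

Lemma orbit_edge x y : e x y -> O x != O y -> quot_adj e (O x) (O y).
Proof.
by move=> exy Oxy; apply/quot_adjP; split=> //; exists x, y; rewrite !orbit_refl.
Qed.

Lemma quot_adj_neighbour b d :
  quot_adj e (O b) (O d) -> exists2 d', d' \in O d & e b d'.
Proof.
case/quot_adjP=> _ [b' [d' [/orbitP[n nN <-] d'd ebd]]].
exists (n^-1 d'); first by rewrite -(orbit_eqP d'd) -apermE mem_orbit ?groupV.
by rewrite -(autN nN) permKV.
Qed.

Lemma quot_triangle_two_geodesic :
  symmetric e -> irreflexive e -> girth_ge [set: T] e 4 ->
  has_cycle_len (orbits_of N) (quot_adj e) 3 ->
  exists a0 a1 a2, two_geodesic e a0 a1 a2 /\ quot_adj e (O a0) (O a2).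
Proof.
move=> eS eI girth4 /has_cycle_len3_triangle[B [C [D [[]]]]].
move=> /imsetP[x _ ->] /imsetP[y0 _ ->] /imsetP[z0 _ ->] xy0 y0z0.
rewrite quot_adj_sym // => xz0.
have [y /orbit_eqP Oy exy] := quot_adj_neighbour xy0.
have [z /orbit_eqP Oz exz] := quot_adj_neighbour xz0.
rewrite -Oy -Oz in y0z0; exists y, x, z; split=> //.
have yz : y != z by apply: contraTneq y0z0 => ->; rewrite /quot_adj eqxx.
by rewrite /two_geodesic eS exy exz yz (girth_ge4_no_triangle eI girth4 _ exy) 1?eS.
Qed.

Section TwoGeodesicTransitive.
Variable G : {group {perm T}}.
Hypotheses (eS : symmetric e) (autG : is_aut_group e G) (nNG : G \subset 'N(N)).
Hypothesis geoG : G2_geodesic_transitive e G.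
Variables a0 a1 a2 : T.
Hypotheses (geo_a : two_geodesic e a0 a1 a2) (adj_a : quot_adj e (O a0) (O a2)).

Lemma quot_adj_perm g x y :
  g \in G -> quot_adj e (O x) (O y) -> quot_adj e (O (g x)) (O (g y)).
Proof.
move=> gG /quot_adjP[Oxy [u [v [ux vy euv]]]]; have gN := subsetP nNG g gG.
apply/quot_adjP; split.
  by apply: contra_neq Oxy => /orbit_eqP; rewrite orbit_perm_norm // => /orbit_eqP.
by exists (g u), (g v); rewrite !orbit_perm_norm // autG.
Qed.

Lemma two_geodesic_quot_adj c b d :
  two_geodesic e c b d -> quot_adj e (O c) (O d).
Proof.
case: geoG => _ _ _ geo2 /(geo2 _ _ _ _ _ _ geo_a)[g gG [<- _ <-]].
exact: quot_adj_perm.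
Qed.

Lemma quot_adj_orbit_trans a b c :
  quot_adj e (O a) (O b) -> quot_adj e (O b) (O c) -> O a != O c ->
  quot_adj e (O a) (O c).
Proof.
rewrite quot_adj_sym // => ba bc.
have [a' /orbit_eqP <- ba'] := quot_adj_neighbour ba.
have [c' /orbit_eqP <- bc'] := quot_adj_neighbour bc.
move=> Oac; have a'c' : a' != c' by apply: contra_neq Oac => ->.
case ea'c' : (e a' c'); first exact: orbit_edge.
apply: (two_geodesic_quot_adj (b := b)).
by rewrite /two_geodesic eS ba' bc' a'c' ea'c'.
Qed.

Lemma connect_quot_adj x y :
  connect e x y -> (O x == O y) || quot_adj e (O x) (O y).
Proof.
apply: (connect_subrel (s := fun u v => (O u == O v) || quot_adj e (O u) (O v))).
- by move=> u; rewrite eqxx.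
- move=> b a c /orP[/eqP-> // | ab] /orP[/eqP<- | bc]; first by rewrite ab orbT.
  have [//|Oac] := eqVneq (O a) (O c); exact: quot_adj_orbit_trans ab bc Oac.
- move=> u v euv; have [//|Ouv] := eqVneq (O u) (O v); exact: orbit_edge.
Qed.

Lemma quot_complete :
  (forall x y, connect e x y) -> complete_graph (orbits_of N) (quot_adj e).
Proof.
move=> conn _ _ /imsetP[x _ ->] /imsetP[y _ ->] Oxy.
by have := connect_quot_adj (conn x y); rewrite (negbTE Oxy).
Qed.

End TwoGeodesicTransitive.
End Orbits.

Theorem lemma3p3 (T : finType) (e : rel T) (G N : {group {perm T}}) :
  symmetric e -> irreflexive e ->
  (forall x y, connect e x y) ->
  is_aut_group e G ->
  G2_geodesic_transitive e G ->
  girth_ge [set: T] e 4 ->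
  N <| G ->
  3 <= #|orbits_of N| ->
  complete_graph (orbits_of N) (quot_adj e) <->
  girth_eq (orbits_of N) (quot_adj e) 3.
Proof.
move=> eS eI conn autG geoG girth4 nNG N3.
split=> [|[triangle _]]; first exact: complete_girth_eq3.
have autN : is_aut_group e N.
  by move=> n /(subsetP (normal_sub nNG)); apply: autG.
have [a0 [a1 [a2 [geo adj]]]] :=
  quot_triangle_two_geodesic autN eS eI girth4 triangle.
exact: (quot_complete autN eS autG (normal_norm nNG) geoG geo adj conn).
Qed.
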